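(* Let $\Phi$ be an irreducible root system of rank $n$ with base $\Delta$, and let $\Psi$ be a simple subroot system of $\Phi$ with $m$ simple roots, where $1\le m<n$. Then $$\frac{n}{|\Phi|}<\frac{m}{|\Psi|},$$ where $|\Phi|$ and $|\Psi|$ denote the total numbers of roots.
   Context: A simple subroot system of $\Phi$ is a subset of the form $\Psi=\{a_1\alpha_1+\dots+a_m\alpha_m:a_i\in\mathbb{Z}\}\cap\Phi$ where $\{\alpha_1,\dots,\alpha_m\}\subseteq\Delta$; then $\{\alpha_1,\dots,\alpha_m\}$ is a base of $\Psi$ (its simple roots). *)

From HB Require Import structures.
From mathcomp Require Import all_boot all_order all_algebra.
From mathcomp Require Import reals.
Set Implicit Arguments. Unset Strict Implicit. Unset Printing Implicit Defensive.
Import Order.TTheory GRing.Theory Num.Theory.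
Local Open Scope ring_scope.

Definition dotv (R : realType) (n : nat) (u v : 'rV[R]_n) : R := (u *m v^T) 0 0.

Definition cartan (R : realType) (n : nat) (b a : 'rV[R]_n) : R :=
  2 * dotv b a / dotv a a.

Definition reflv (R : realType) (n : nat) (a b : 'rV[R]_n) : 'rV[R]_n :=
  b - cartan b a *: a.

(* A (reduced, crystallographic) root system in R^n, given as a
   duplicate-free list of its roots. *)
Definition is_root_system (R : realType) (n : nat) (Phi : seq 'rV[R]_n) : Prop :=
  [/\ uniq Phi /\ 0 \notin Phi,
      (<<Phi>>%VS = fullv),
      (forall a b, a \in Phi -> b \in Phi -> reflv a b \in Phi),
      (forall a b, a \in Phi -> b \in Phi -> exists z : int, cartan b a = z%:~R) &
      (forall a (c : R), a \in Phi -> c *: a \in Phi -> c = 1 \/ c = -1)].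

Definition irreducible_rs (R : realType) (n : nat) (Phi : seq 'rV[R]_n) : Prop :=
  forall S : pred 'rV[R]_n,
    (forall a b, a \in Phi -> b \in Phi -> S a -> ~~ S b -> dotv a b = 0) ->
    all S Phi \/ all (predC S) Phi.

Definition in_Zspan (R : realType) (n : nat) (S : seq 'rV[R]_n) (v : 'rV[R]_n) : Prop :=
  exists c : seq int, size c = size S /\
    v = \sum_(i < size S) (c`_i)%:~R *: S`_i.

Definition is_base (R : realType) (n : nat) (Phi Delta : seq 'rV[R]_n) : Prop :=
  [/\ {subset Delta <= Phi},
      basis_of fullv Delta &
      (forall b, b \in Phi -> exists c : seq int,
         [/\ size c = size Delta,
             b = \sum_(i < size Delta) (c`_i)%:~R *: Delta`_i &
             (all (fun z => 0 <= z) c \/ all (fun z => z <= 0) c)])].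

From HB Require Import structures.
From mathcomp Require Import all_boot all_order all_algebra.
From mathcomp Require Import reals.
From mathcomp Require Import ring.
Import Order.TTheory GRing.Theory Num.Theory.
Set Implicit Arguments. Unset Strict Implicit. Unset Printing Implicit Defensive.
Local Open Scope ring_scope.

(* The symmetric matrix M := \sum_(a in Phi) a^T a / (a, a) commutes with every
   reflection s_b, so each root is an eigenvector of M; eigenvalues of
   non-orthogonal roots agree, hence by irreducibility M = lam 1 and
   |Phi| = tr M = lam n.  If P is the orthogonal projection onto span S, then
   lam m = tr (P M P) = \sum_(a in Phi) |a P|^2 / |a|^2.  Roots of Psi
   contribute 1 each, the others at least 0, and some root outside Psi is not
   orthogonal to span S, for otherwise Psi and its complement would split
   Phi.  Hence lam m > |Psi|, i.e. n / |Phi| = 1 / lam < m / |Psi|. *)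

Section DotProduct.
Variables (R : realType) (n : nat).
Implicit Types u v : 'rV[R]_n.

Lemma dotvE u v : dotv u v = \sum_j u 0 j * v 0 j.
Proof. by rewrite /dotv mxE; apply: eq_bigr => j _; rewrite mxE. Qed.

Lemma dotvC u v : dotv u v = dotv v u.
Proof. by rewrite !dotvE; apply: eq_bigr => j _; rewrite mulrC. Qed.

Lemma dotvZl k u v : dotv (k *: u) v = k * dotv u v.
Proof. by rewrite !dotvE mulr_sumr; apply: eq_bigr => j _; rewrite mxE mulrA. Qed.

Lemma dotv_ge0 u : 0 <= dotv u u.
Proof. by rewrite dotvE; apply: sumr_ge0 => j _; rewrite -expr2 sqr_ge0. Qed.

Lemma dotv_eq0 u : dotv u u = 0 -> u = 0.
Proof.
rewrite dotvE => /eqP; rewrite psumr_eq0 => [/allP u0|j _]; last first.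
  by rewrite -expr2 sqr_ge0.
apply/rowP => j; rewrite mxE.
by have := u0 j (mem_index_enum _); rewrite -expr2 sqrf_eq0 => /eqP.
Qed.

Lemma dotv_gt0 u : u != 0 -> 0 < dotv u u.
Proof.
by move=> u0; rewrite lt_def dotv_ge0 andbT; apply: contra_neq u0 => /dotv_eq0.
Qed.

Lemma dotv_mulmx_tr m (u : 'rV[R]_m) v (A : 'M[R]_(m, n)) :
  dotv (u *m A) v = dotv u (v *m A^T).
Proof. by rewrite /dotv trmx_mul trmxK mulmxA. Qed.

Lemma mulmx_outer u v : u *m (v^T *m v) = dotv u v *: v.
Proof. by rewrite mulmxA [u *m _]mx11_scalar mul_scalar_mx. Qed.

Lemma mxtrace_outer u : \tr (u^T *m u) = dotv u u.
Proof. by rewrite mxtrace_mulC /mxtrace big_ord1. Qed.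

Lemma eq_mx_on_span (X : seq 'rV[R]_n) (A B : 'M[R]_n) :
  <<X>>%VS = fullv -> (forall x, x \in X -> x *m A = x *m B) -> A = B.
Proof.
move=> spanX eqAB; apply/row_matrixP => i; rewrite -[A]mul1mx -[B]mul1mx !row_mul.
have : row i 1%:M \in <<in_tuple X>>%VS by rewrite spanX memvf.
move/coord_span => ->; rewrite !mulmx_suml; apply: eq_bigr => j _.
by rewrite -!scalemxAl eqAB ?mem_nth.
Qed.

End DotProduct.

Section Reflection.
Variables (R : realType) (n : nat) (b : 'rV[R]_n).

Definition refl_mx : 'M[R]_n := 1%:M - (2 / dotv b b) *: (b^T *m b).

Lemma mul_refl_mx a : a *m refl_mx = reflv b a.
Proof.
rewrite /refl_mx mulmxBr mulmx1 -scalemxAr mulmx_outer scalerA /reflv /cartan.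
by congr (_ - _ *: _); ring.
Qed.

Lemma trmx_refl : refl_mx^T = refl_mx.
Proof. by rewrite /refl_mx linearB /= trmx1 linearZ /= trmx_mul trmxK. Qed.

Hypothesis b_neq0 : b != 0.

Lemma refl_mxK : refl_mx *m refl_mx = 1%:M.
Proof.
have bb_neq0 : dotv b b != 0 by rewrite gt_eqF ?dotv_gt0.
have outer2 : (b^T *m b) *m (b^T *m b) = dotv b b *: (b^T *m b).
  by rewrite -mulmxA mulmx_outer scalemxAr.
rewrite /refl_mx mulmxBl mul1mx mulmxBr mulmx1 -scalemxAl -scalemxAr outer2 !scalerA.
have -> : 2 / dotv b b * (2 / dotv b b) * dotv b b = 2 / dotv b b + 2 / dotv b b.
  by field.
by rewrite scalerDl opprB addrK subrK.
Qed.

Lemma dotv_refl a : dotv (a *m refl_mx) (a *m refl_mx) = dotv a a.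
Proof. by rewrite dotv_mulmx_tr trmx_refl -mulmxA refl_mxK mulmx1. Qed.

Lemma refl_mx_root : b *m refl_mx = - b.
Proof.
have bb_neq0 : dotv b b != 0 by rewrite gt_eqF ?dotv_gt0.
rewrite mul_refl_mx /reflv /cartan -mulrA divff // mulr1 scaler_nat mulr2n.
by rewrite opprD addrA subrr sub0r.
Qed.

End Reflection.

Section RootForm.
Variables (R : realType) (n : nat) (Phi : seq 'rV[R]_n).
Hypothesis Phi_rs : is_root_system Phi.

Definition root_form : 'M[R]_n := \sum_(a <- Phi) (dotv a a)^-1 *: (a^T *m a).

Lemma trmx_root_form : root_form^T = root_form.
Proof.
rewrite raddf_sum; apply: eq_bigr => a _.
by rewrite /= linearZ /= trmx_mul trmxK.
Qed.

Lemma root_neq0 a : a \in Phi -> a != 0.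
Proof. by case: Phi_rs => [[_ Phi_neq0] _ _ _ _] aP; apply: contraNneq Phi_neq0 => <-. Qed.

Lemma perm_refl_roots b : b \in Phi -> perm_eq [seq a *m refl_mx b | a <- Phi] Phi.
Proof.
case: Phi_rs => [[uPhi _] _ reflP _ _] bP.
have reflK : cancel (fun a : 'rV[R]_n => a *m refl_mx b) (fun a => a *m refl_mx b).
  by move=> a; rewrite -mulmxA refl_mxK ?root_neq0 // mulmx1.
apply: uniq_perm => //.
  by rewrite (map_inj_uniq (can_inj reflK)).
move=> a; apply/mapP/idP => [[c cP ->]|aP]; first by rewrite mul_refl_mx reflP.
by exists (a *m refl_mx b); rewrite ?(reflK a) // mul_refl_mx reflP.
Qed.

Lemma root_form_refl b : b \in Phi -> refl_mx b *m root_form *m refl_mx b = root_form.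
Proof.
move=> bP; rewrite mulmx_sumr mulmx_suml -[RHS](perm_big _ (perm_refl_roots bP)).
rewrite big_map; apply: eq_bigr => a _.
rewrite dotv_refl ?root_neq0 // -scalemxAr -scalemxAl.
by rewrite trmx_mul trmx_refl !mulmxA.
Qed.

Definition root_eigenvalue (a : 'rV[R]_n) : R := dotv (a *m root_form) a / dotv a a.

(* [s_b] fixes [M] and negates [b], so [b M] is a multiple of [b]. *)
Lemma root_form_eigen b : b \in Phi -> b *m root_form = root_eigenvalue b *: b.
Proof.
move=> bP; have bb_neq0 : dotv b b != 0 by rewrite gt_eqF ?dotv_gt0 ?root_neq0.
set v := b *m root_form.
have v_refl : v = - (v *m refl_mx b).
  by rewrite /v -{1}(root_form_refl bP) !mulmxA refl_mx_root ?root_neq0 // !mulNmx.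
have v2 : v *+ 2 = cartan v b *: b.
  by rewrite mulr2n {1}v_refl mul_refl_mx /reflv opprB subrK.
have -> : v = 2^-1 *: (v *+ 2) by rewrite -scaler_nat scalerA mulVf ?pnatr_eq0 // scale1r.
by rewrite v2 scalerA /root_eigenvalue /cartan; congr (_ *: _); field.
Qed.

Lemma root_eigenvalue_orth a b : a \in Phi -> b \in Phi ->
  dotv a b != 0 -> root_eigenvalue a = root_eigenvalue b.
Proof.
move=> aP bP ab_neq0; have := dotv_mulmx_tr a b root_form.
rewrite trmx_root_form (root_form_eigen aP) (root_form_eigen bP) dotvZl.
by rewrite [dotv a (_ *: _)]dotvC dotvZl [dotv b a]dotvC => /(mulIf ab_neq0).
Qed.

Hypothesis Phi_irr : irreducible_rs Phi.

Lemma root_form_scalar a0 : a0 \in Phi -> root_form = (root_eigenvalue a0)%:M.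
Proof.
move=> a0P; case: Phi_rs => [_ spanPhi _ _ _].
pose S a := root_eigenvalue a == root_eigenvalue a0.
have S_orth a b : a \in Phi -> b \in Phi -> S a -> ~~ S b -> dotv a b = 0.
  move=> aP bP /eqP Sa; apply: contraNeq => ab_neq0.
  by rewrite /S -Sa (root_eigenvalue_orth aP bP ab_neq0).
have [/allP allS | /allP allNS] := Phi_irr S_orth; last first.
  by have := allNS a0 a0P; rewrite /= /S eqxx.
apply: (eq_mx_on_span spanPhi) => a aP.
by rewrite root_form_eigen // mul_mx_scalar (eqP (allS a aP)).
Qed.

Lemma mxtrace_root_form : \tr root_form = (size Phi)%:R.
Proof.
rewrite raddf_sum -sum1_size natr_sum !big_seq; apply: eq_bigr => a aP.
by rewrite /= mxtraceZ mxtrace_outer mulVf // gt_eqF ?dotv_gt0 ?root_neq0.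
Qed.

End RootForm.

Section Projection.
Variables (R : realType) (n : nat) (S : seq 'rV[R]_n).
Hypothesis S_free : free S.

Definition span_mx : 'M[R]_(size S, n) := \matrix_(i < size S, j < n) S`_i 0 j.
Definition gram_mx := span_mx *m span_mx^T.
Definition orth_proj : 'M[R]_n := span_mx^T *m invmx gram_mx *m span_mx.

Lemma row_span_mx i : row i span_mx = S`_i.
Proof. by apply/rowP => j; rewrite !mxE. Qed.

Lemma in_Zspan_mx v : in_Zspan S v -> exists c, v = c *m span_mx.
Proof.
case=> c [_ ->]; exists (\row_i (c`_i)%:~R); rewrite mulmx_sum_row.
by apply: eq_bigr => i _; rewrite row_span_mx mxE.
Qed.

Lemma span_mx_inj (c : 'rV[R]_(size S)) : c *m span_mx = 0 -> c = 0.
Proof.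
rewrite mulmx_sum_row => c0; apply/rowP => i; rewrite mxE.
apply: (freeP (S_free : free (in_tuple S)) (fun i => c 0 i)).
by rewrite -[RHS]c0; apply: eq_bigr => j _; rewrite row_span_mx.
Qed.

Lemma gram_mx_unit : gram_mx \in unitmx.
Proof.
rewrite -row_free_unit; apply: inj_row_free => c cG; apply/span_mx_inj/dotv_eq0.
by rewrite /dotv trmx_mul mulmxA -(mulmxA c) -/gram_mx cG mul0mx mxE.
Qed.

Lemma trmx_orth_proj : orth_proj^T = orth_proj.
Proof.
by rewrite /orth_proj !trmx_mul trmxK trmx_inv /gram_mx trmx_mul trmxK mulmxA.
Qed.

Lemma orth_proj_span (c : 'rV[R]_(size S)) : c *m span_mx *m orth_proj = c *m span_mx.
Proof. by rewrite /orth_proj !mulmxA -(mulmxA c) mulmxK ?gram_mx_unit. Qed.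

Lemma orth_proj_idem : orth_proj *m orth_proj = orth_proj.
Proof.
rewrite /orth_proj -!mulmxA; congr (_ *m _).
by rewrite !mulmxA -(mulmxA _ span_mx) -/gram_mx mulVmx ?gram_mx_unit // mul1mx.
Qed.

Lemma mxtrace_orth_proj : \tr orth_proj = (size S)%:R.
Proof. by rewrite /orth_proj -mulmxA mxtrace_mulC -mulmxA mulVmx ?gram_mx_unit ?mxtrace1. Qed.

Lemma orth_proj_eq0_orth a (c : 'rV[R]_(size S)) :
  a *m orth_proj = 0 -> dotv a (c *m span_mx) = 0.
Proof.
move=> aP0; have aBG : a *m span_mx^T *m invmx gram_mx = 0.
  by apply: span_mx_inj; rewrite /orth_proj !mulmxA in aP0.
have aB : a *m span_mx^T = 0.
  by rewrite -(mulmxKV gram_mx_unit (a *m span_mx^T)) aBG mul0mx.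
by rewrite dotvC dotv_mulmx_tr aB /dotv trmx0 mulmx0 mxE.
Qed.

Definition proj_ratio (a : 'rV[R]_n) : R :=
  dotv (a *m orth_proj) (a *m orth_proj) / dotv a a.

Lemma proj_ratio_ge0 a : 0 <= proj_ratio a.
Proof. by rewrite divr_ge0 ?dotv_ge0. Qed.

Lemma proj_ratio_gt0 a : a *m orth_proj != 0 -> 0 < proj_ratio a.
Proof.
move=> aP_neq0; apply: divr_gt0; first exact: dotv_gt0.
by apply/dotv_gt0; apply: contraNneq aP_neq0 => ->; rewrite mul0mx.
Qed.

Lemma proj_ratio_Zspan a : a != 0 -> in_Zspan S a -> proj_ratio a = 1.
Proof.
move=> a_neq0 /in_Zspan_mx [c ac].
by rewrite /proj_ratio {1 2}ac orth_proj_span -ac divff // gt_eqF ?dotv_gt0.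
Qed.

Lemma mxtrace_proj_conj (X : seq 'rV[R]_n) :
  \tr (orth_proj *m root_form X *m orth_proj) = \sum_(a <- X) proj_ratio a.
Proof.
rewrite mulmx_sumr mulmx_suml raddf_sum; apply: eq_bigr => a _.
rewrite -scalemxAr -scalemxAl /= mxtraceZ /proj_ratio mulrC.
by rewrite -[dotv (a *m _) _]mxtrace_outer trmx_mul trmx_orth_proj !mulmxA.
Qed.

End Projection.

Lemma free_subset (R : realType) (n : nat) (S D : seq 'rV[R]_n) :
  free D -> uniq S -> {subset S <= D} -> free S.
Proof.
move=> freeD uS SD; have /perm_free -> : perm_eq S (filter (mem S) D).
  apply: uniq_perm => //; first by rewrite filter_uniq ?free_uniq.
  by move=> x; rewrite mem_filter; apply/idP/andP => [xS|[]//]; split; last exact: SD.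
exact: filter_free.
Qed.

Lemma in_Zspan_nth (R : realType) (n : nat) (S : seq 'rV[R]_n) i :
  (i < size S)%N -> in_Zspan S S`_i.
Proof.
move=> ltiS; exists (mkseq (fun j => (j == i)%:Z) (size S)); split.
  by rewrite size_mkseq.
rewrite (bigD1 (Ordinal ltiS)) //= big1 ?addr0 => [|j neq_ji].
  by rewrite nth_mkseq // eqxx scale1r.
by rewrite nth_mkseq //= -[j == i :> nat]/(j == Ordinal ltiS) (negbTE neq_ji) scale0r.
Qed.

Section Subsystem.
Variables (R : realType) (n : nat) (Phi S Psi : seq 'rV[R]_n).
Hypotheses (Phi_rs : is_root_system Phi) (Phi_irr : irreducible_rs Phi).
Hypotheses (S_free : free S) (Psi_uniq : uniq Psi).
Hypothesis Psi_def : forall v, v \in Psi <-> v \in Phi /\ in_Zspan S v.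

Lemma sum_proj_ratio_subsystem :
  \sum_(a <- Phi | a \in Psi) proj_ratio S a = (size Psi)%:R.
Proof.
case: Phi_rs => [[Phi_uniq _] _ _ _ _]; rewrite -big_filter.
have PhiPsi : perm_eq (filter (mem Psi) Phi) Psi.
  apply: uniq_perm => //; first by rewrite filter_uniq.
  by move=> x; rewrite mem_filter andb_idr // => /Psi_def [].
rewrite (perm_big _ PhiPsi).
rewrite -sum1_size natr_sum !big_seq; apply: eq_bigr => a /Psi_def [aP aZ].
exact: proj_ratio_Zspan (root_neq0 Phi_rs aP) aZ.
Qed.

(* Otherwise [Psi] would be orthogonal to the rest of [Phi]; irreducibility
   then forces [Psi = Phi], so [orth_proj S = 1] and [size S = n]. *)
Lemma has_root_off_subsystem a0 : a0 \in Psi -> (size S < n)%N ->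
  has (fun a => (a \notin Psi) && (a *m orth_proj S != 0)) Phi.
Proof.
case: Phi_rs => [_ spanPhi _ _ _] a0Psi ltSn; apply: contraT => /hasPn offPsi.
have orthPsi a b : a \in Phi -> b \in Phi -> a \in Psi -> b \notin Psi -> dotv a b = 0.
  move=> _ bP /Psi_def [_ /in_Zspan_mx [c ->]] bNPsi; rewrite dotvC.
  by apply/(orth_proj_eq0_orth S_free)/eqP; move: (offPsi b bP); rewrite bNPsi /= negbK.
have [/allP allPsi | /allP allNPsi] := Phi_irr orthPsi; last first.
  by have := allNPsi a0 (proj1 ((Psi_def a0).1 a0Psi)); rewrite /= a0Psi.
suff P1 : orth_proj S = 1%:M.
  by move: (mxtrace_orth_proj S_free); rewrite P1 mxtrace1 => /eqP; rewrite eqr_nat gtn_eqF.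
apply: (eq_mx_on_span spanPhi) => a aP; rewrite mulmx1.
by have [_ /in_Zspan_mx [c ->]] := (Psi_def a).1 (allPsi a aP); apply: orth_proj_span.
Qed.

Lemma sum_proj_ratio_gt a0 : a0 \in Psi -> (size S < n)%N ->
  (size Psi)%:R < \sum_(a <- Phi) proj_ratio S a.
Proof.
case: Phi_rs => [[Phi_uniq _] _ _ _ _] a0Psi ltSn.
rewrite (bigID (mem Psi)) /= sum_proj_ratio_subsystem ltrDl.
have /hasP [a aP /andP [aNPsi aS]] := has_root_off_subsystem a0Psi ltSn.
rewrite -big_filter (bigD1_seq a) ?filter_uniq ?mem_filter ?aNPsi //=.
by rewrite ltr_pwDl ?proj_ratio_gt0 // sumr_ge0 // => b _; apply: proj_ratio_ge0.
Qed.

End Subsystem.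

Theorem lemma3 (R : realType) (n : nat) (Phi Delta : seq 'rV[R]_n)
    (S : seq 'rV[R]_n) (Psi : seq 'rV[R]_n) (m : nat) :
  is_root_system Phi -> irreducible_rs Phi -> is_base Phi Delta ->
  uniq S -> {subset S <= Delta} -> size S = m -> (1 <= m)%N -> (m < n)%N ->
  uniq Psi -> (forall v, v \in Psi <-> v \in Phi /\ in_Zspan S v) ->
  (n%:R / (size Phi)%:R : R) < m%:R / (size Psi)%:R.
Proof.
move=> rs irr [DeltaPhi Delta_basis _] uS SDelta <- S_gt0 ltSn uPsi Psi_def.
have S_free := free_subset (basis_free Delta_basis) uS SDelta.
have S0Psi : S`_0 \in Psi.
  by apply/Psi_def; split; [exact/DeltaPhi/SDelta/mem_nth | exact: in_Zspan_nth].
have [S0Phi _] := (Psi_def _).1 S0Psi.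
set lam := root_eigenvalue Phi S`_0.
have M_lam := root_form_scalar rs irr S0Phi; rewrite -/lam in M_lam.
have Phi_lam : (size Phi)%:R = lam * n%:R.
  by rewrite -(mxtrace_root_form rs) M_lam mxtrace_scalar mulr_natr.
have Psi_lam : (size Psi)%:R < lam * (size S)%:R.
  have := mxtrace_proj_conj S Phi.
  rewrite M_lam mul_mx_scalar -scalemxAl orth_proj_idem // mxtraceZ.
  rewrite mxtrace_orth_proj // => ->.
  exact: (sum_proj_ratio_gt rs irr S_free uPsi Psi_def S0Psi).
have n_gt0 : (0 : R) < n%:R by rewrite ltr0n (leq_ltn_trans _ ltSn).
have Psi_gt0 : (0 : R) < (size Psi)%:R by rewrite ltr0n; case: (Psi) S0Psi.
have lam_gt0 : 0 < lam by rewrite -(pmulr_lgt0 _ n_gt0) -Phi_lam ltr0n; case: (Phi) S0Phi.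
rewrite Phi_lam -subr_gt0.
have -> : (size S)%:R / (size Psi)%:R - n%:R / (lam * n%:R) =
    (lam * (size S)%:R - (size Psi)%:R) / (lam * (size Psi)%:R).
  by field; rewrite !gt_eqF.
by apply: divr_gt0; [rewrite subr_gt0 | exact: mulr_gt0].
Qed.
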